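(* For the two-user MIMO interference channel of the context with a fixed channel realization $H$ (known at all nodes), the Han–Kobayashi scheme $\mathcal{HK}(K_{11},K_{12},K_{21},K_{22})$ with $$K_{i1}=\tfrac12 I_{M_i},\qquad K_{i2}=\tfrac12\left(I_{M_i}+\rho_{ij}H_{ij}^\dagger H_{ij}\right)^{-1}\quad(i\ne j)$$ achieves every rate pair $(R_1,R_2)$ with $R_1,R_2\ge0$ belonging to $\mathcal{R}^c(H,\bar\rho)-(2N_1,2N_2)$.
   Context: Channel: transmitter $i\in\{1,2\}$ has $M_i$ antennas, receiver $j$ has $N_j$ antennas, $H_{ij}\in\mathbb{C}^{N_j\times M_i}$ from transmitter $i$ to receiver $j$; $Y_1=\sqrt{\rho_{11}}H_{11}X_1+\sqrt{\rho_{21}}H_{21}X_2+Z_1$, $Y_2=\sqrt{\rho_{12}}H_{12}X_1+\sqrt{\rho_{22}}H_{22}X_2+Z_2$, $Z_j$ i.i.d. $\mathcal{CN}(0,I_{N_j})$, power constraint $\mathrm{tr}(\mathbb{E}[X_iX_i^\dagger])\le M_i$. Han–Kobayashi scheme $\mathcal{HK}(K_{11},K_{12},K_{21},K_{22})$: each user splits its message into a public part and a private part, encoded by independent random Gaussian codebooks; the transmitted signal is $X_i=U_i+W_i$ with $W_i\sim\mathcal{CN}(0,K_{i1})$ (public) and $U_i\sim\mathcal{CN}(0,K_{i2})$ (private) independent; each receiver decodes its own public and private messages together with the other user's public message, treating the other user's private signal as noise. Logs base 2; $P_{ij}=I_{M_i}+\rho_{ij}H_{ij}^\dagger H_{ij}$.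 $\mathcal{R}^c(H,\bar\rho)$ is the set of $(R_1,R_2)$, $R_1,R_2\ge0$, with $R_i\le\log|I_{N_i}+\rho_{ii}H_{ii}H_{ii}^\dagger|$ ($i=1,2$); $R_1+R_2\le\log|I_{N_2}+\rho_{12}H_{12}H_{12}^\dagger+\rho_{22}H_{22}H_{22}^\dagger|+\log|I_{N_1}+\rho_{11}H_{11}P_{12}^{-1}H_{11}^\dagger|$; $R_1+R_2\le\log|I_{N_1}+\rho_{21}H_{21}H_{21}^\dagger+\rho_{11}H_{11}H_{11}^\dagger|+\log|I_{N_2}+\rho_{22}H_{22}P_{21}^{-1}H_{22}^\dagger|$; $R_1+R_2\le\log|I_{N_1}+\rho_{11}H_{11}P_{12}^{-1}H_{11}^\dagger+\rho_{21}H_{21}H_{21}^\dagger|+\log|I_{N_2}+\rho_{12}H_{12}H_{12}^\dagger+\rho_{22}H_{22}P_{21}^{-1}H_{22}^\dagger|$; $2R_1+R_2\le\log|I_{N_1}+\rho_{21}H_{21}H_{21}^\dagger+\rho_{11}H_{11}H_{11}^\dagger|+\log|I_{N_2}+\rho_{12}H_{12}H_{12}^\dagger+\rho_{22}H_{22}P_{21}^{-1}H_{22}^\dagger|+\log|I_{N_1}+\rho_{11}H_{11}P_{12}^{-1}H_{11}^\dagger|$; $R_1+2R_2\le\log|I_{N_2}+\rho_{12}H_{12}H_{12}^\dagger+\rho_{22}H_{22}H_{22}^\dagger|+\log|I_{N_1}+\rho_{21}H_{21}H_{21}^\dagger+\rho_{11}H_{11}P_{12}^{-1}H_{11}^\dagger|+\log|I_{N_2}+\rho_{22}H_{22}P_{21}^{-1}H_{22}^\dagger|$.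 $\mathcal{R}-(c_1,c_2)=\{(R_1-c_1,R_2-c_2):(R_1,R_2)\in\mathcal{R}\}$. *)

From HB Require Import structures.
From mathcomp Require Import all_boot all_order all_algebra.
From mathcomp Require Import complex.
From mathcomp Require Import reals exp.
Set Implicit Arguments. Unset Strict Implicit. Unset Printing Implicit Defensive.
Import Order.TTheory GRing.Theory Num.Theory.
Local Open Scope ring_scope.

Section MIMO.
Variable R : realType.
Local Notation C := (R[i]).

Definition ctr (m n : nat) (A : 'M[C]_(m, n)) : 'M[C]_(n, m) := map_mx (@conjc R) A^T.

(* log base 2 of the determinant of a (Hermitian positive definite) matrix;
   its determinant is real, we take its real part *)
Definition log2 (x : R) : R := ln x / ln 2.
Definition logdet (n : nat) (A : 'M[C]_n) : R := log2 (complex.Re (\det A)).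

Definition gram (n m : nat) (rho : R) (H : 'M[C]_(n, m)) (K : 'M[C]_m) : 'M[C]_n :=
  (rho%:C)%C *: (H *m K *m ctr H).

Definition Pmx (n m : nat) (rho : R) (H : 'M[C]_(n, m)) : 'M[C]_m :=
  1%:M + (rho%:C)%C *: (ctr H *m H).

(* Channel: Hij : 'M_(N_j, M_i) from transmitter i to receiver j. *)

Definition Rc (M1 M2 N1 N2 : nat)
  (H11 : 'M[C]_(N1, M1)) (H12 : 'M[C]_(N2, M1))
  (H21 : 'M[C]_(N1, M2)) (H22 : 'M[C]_(N2, M2))
  (r11 r12 r21 r22 : R) (r : R * R) : Prop :=
  let R1 := r.1 in let R2 := r.2 in
  let I1 : 'M[C]_N1 := 1%:M in let I2 : 'M[C]_N2 := 1%:M in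
  let iP12 := invmx (Pmx r12 H12) in let iP21 := invmx (Pmx r21 H21) in
  (0 <= R1) /\ (0 <= R2) /\
      R1 <= logdet (I1 + gram r11 H11 1%:M) /\
      R2 <= logdet (I2 + gram r22 H22 1%:M) /\
      R1 + R2 <= logdet (I2 + gram r12 H12 1%:M + gram r22 H22 1%:M)
                 + logdet (I1 + gram r11 H11 iP12) /\
      R1 + R2 <= logdet (I1 + gram r21 H21 1%:M + gram r11 H11 1%:M)
                 + logdet (I2 + gram r22 H22 iP21) /\
      R1 + R2 <= logdet (I1 + gram r11 H11 iP12 + gram r21 H21 1%:M)
                 + logdet (I2 + gram r12 H12 1%:M + gram r22 H22 iP21) /\
      R1 *+ 2 + R2 <= logdet (I1 + gram r21 H21 1%:M + gram r11 H11 1%:M)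
                 + logdet (I2 + gram r12 H12 1%:M + gram r22 H22 iP21)
                 + logdet (I1 + gram r11 H11 iP12) /\
      R1 + R2 *+ 2 <= logdet (I2 + gram r12 H12 1%:M + gram r22 H22 1%:M)
                 + logdet (I1 + gram r21 H21 1%:M + gram r11 H11 iP12)
                 + logdet (I2 + gram r22 H22 iP21).

Definition shift_region (S : R * R -> Prop) (c1 c2 : R) (r : R * R) : Prop :=
  exists r' : R * R, S r' /\ r = (r'.1 - c1, r'.2 - c2).

(* Rate region achieved by the Han-Kobayashi scheme HK(K11,K12,K21,K22) with
   independent Gaussian codebooks: W_i ~ CN(0,K_i1) public, U_i ~ CN(0,K_i2)
   private, X_i = U_i + W_i; receiver j decodes (W_j, U_j, W_i) treating U_i
   as noise.  This is the (Chong-Motani-Garg form of the) Han-Kobayashi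
   achievable region, with the mutual informations evaluated for Gaussian
   inputs:
     a1 = I(Y1;X1|W2), b1 = I(Y1;X1,W2), c1 = I(Y1;X1|W1,W2),
     d1 = I(Y1;X1,W2|W1), and symmetrically at receiver 2. *)
Definition HK_region (M1 M2 N1 N2 : nat)
  (H11 : 'M[C]_(N1, M1)) (H12 : 'M[C]_(N2, M1))
  (H21 : 'M[C]_(N1, M2)) (H22 : 'M[C]_(N2, M2))
  (r11 r12 r21 r22 : R)
  (K11 K12 : 'M[C]_M1) (K21 K22 : 'M[C]_M2) (r : R * R) : Prop :=
  let R1 := r.1 in let R2 := r.2 in
  (* noise-plus-interference covariances (other user's private part = noise) *)
  let S1 : 'M[C]_N1 := 1%:M + gram r21 H21 K22 in
  let S2 : 'M[C]_N2 := 1%:M + gram r12 H12 K12 in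
  let a1 := logdet (S1 + gram r11 H11 (K11 + K12)) - logdet S1 in
  let b1 := logdet (S1 + gram r11 H11 (K11 + K12) + gram r21 H21 K21) - logdet S1 in
  let c1 := logdet (S1 + gram r11 H11 K12) - logdet S1 in
  let d1 := logdet (S1 + gram r11 H11 K12 + gram r21 H21 K21) - logdet S1 in
  let a2 := logdet (S2 + gram r22 H22 (K21 + K22)) - logdet S2 in
  let b2 := logdet (S2 + gram r22 H22 (K21 + K22) + gram r12 H12 K11) - logdet S2 in
  let c2 := logdet (S2 + gram r22 H22 K22) - logdet S2 in
  let d2 := logdet (S2 + gram r22 H22 K22 + gram r12 H12 K11) - logdet S2 in
  (0 <= R1) /\ (0 <= R2) /\
      R1 <= a1 /\ R2 <= a2 /\
      R1 + R2 <= b1 + c2 /\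
      R1 + R2 <= b2 + c1 /\
      R1 + R2 <= d1 + d2 /\
      R1 *+ 2 + R2 <= b1 + c1 + d2 /\
      R1 + R2 *+ 2 <= b2 + c2 + d1.

End MIMO.

From HB Require Import structures.
From mathcomp Require Import all_boot all_order all_algebra.
From mathcomp Require Import complex.
From mathcomp Require Import reals exp.
From mathcomp Require Import ring lra.
Import Order.TTheory GRing.Theory Num.Theory.
Local Open Scope ring_scope.
Set Implicit Arguments. Unset Strict Implicit. Unset Printing Implicit Defensive.

(* With private covariance [K_i2 = P_ij^-1 / 2] (absorbing [rho] into [H]), the
   noise-plus-interference covariance at receiver [j] is [S = I + H P^-1 H^+ / 2].
   The push-through identity gives [H P^-1 H^+ = I - (I + H H^+)^-1 <= I], so
   [I <= S] and [det S <= 2^N].  Each Han-Kobayashi mutual information has the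
   form [log det (S + A) - log det S] while the matching term of [Rc] is
   [log det (I + B)] with [A >= B / 2]; since then [2 (S + A) >= I + B], the
   monotonicity of the determinant in the Loewner order (proved by induction
   through Schur complements) bounds the loss by [N] bits for each of the two
   determinants.  Adding these bounds turns each constraint of [Rc] shifted by
   [2 N_j] into the corresponding Han-Kobayashi constraint. *)

Section HermitianMatrices.
Variable R : realType.
Local Notation C := (R[i]).

Lemma ctrE m n (A : 'M[C]_(m, n)) i j : ctr A i j = conjc (A j i).
Proof. by rewrite /ctr !mxE. Qed.

Lemma ctrK m n (A : 'M[C]_(m, n)) : ctr (ctr A) = A.
Proof. by apply/matrixP=> i j; rewrite !ctrE conjcK. Qed.

Lemma ctrM m n p (A : 'M[C]_(m, n)) (B : 'M[C]_(n, p)) :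
  ctr (A *m B) = ctr B *m ctr A.
Proof. by rewrite /ctr trmx_mul map_mxM. Qed.

Lemma ctrD m n (A B : 'M[C]_(m, n)) : ctr (A + B) = ctr A + ctr B.
Proof. by rewrite /ctr raddfD /= map_mxD. Qed.

Lemma ctrB m n (A B : 'M[C]_(m, n)) : ctr (A - B) = ctr A - ctr B.
Proof. by rewrite /ctr raddfB /= map_mxB. Qed.

Lemma ctrZ m n (c : C) (A : 'M[C]_(m, n)) : ctr (c *: A) = conjc c *: ctr A.
Proof. by rewrite /ctr linearZ /= map_mxZ. Qed.

Lemma ctr_scalar n (c : C) : ctr (c%:M : 'M_n) = (conjc c)%:M.
Proof. by rewrite /ctr tr_scalar_mx map_scalar_mx. Qed.

Lemma ctr_block m1 m2 n1 n2 (a : 'M[C]_(m1, n1)) (b : 'M[C]_(m1, n2))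
    (c : 'M[C]_(m2, n1)) (d : 'M[C]_(m2, n2)) :
  ctr (block_mx a b c d) = block_mx (ctr a) (ctr c) (ctr b) (ctr d).
Proof. by rewrite /ctr tr_block_mx map_block_mx. Qed.

Lemma ctr_col m1 m2 n (a : 'M[C]_(m1, n)) (b : 'M[C]_(m2, n)) :
  ctr (col_mx a b) = row_mx (ctr a) (ctr b).
Proof. by rewrite /ctr tr_col_mx map_row_mx. Qed.

Lemma ctr_inv n (A : 'M[C]_n) : ctr (invmx A) = invmx (ctr A).
Proof. by rewrite /ctr trmx_inv map_invmx. Qed.

Definition herm n (A : 'M[C]_n) := ctr A = A.
Definition qf n (A : 'M[C]_n) (x : 'cV[C]_n) : C := (ctr x *m A *m x) 0 0.
Definition psd n (A : 'M[C]_n) := herm A /\ forall x, 0 <= qf A x.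
Definition pd n (A : 'M[C]_n) := herm A /\ forall x, x != 0 -> 0 < qf A x.

Lemma herm1 n : herm (1%:M : 'M[C]_n).
Proof. by rewrite /herm ctr_scalar conjc1. Qed.

Lemma hermD n (A B : 'M[C]_n) : herm A -> herm B -> herm (A + B).
Proof. by rewrite /herm ctrD => -> ->. Qed.

Lemma hermB n (A B : 'M[C]_n) : herm A -> herm B -> herm (A - B).
Proof. by rewrite /herm ctrB => -> ->. Qed.

Lemma hermZ n (c : C) (A : 'M[C]_n) : conjc c = c -> herm A -> herm (c *: A).
Proof. by rewrite /herm ctrZ => -> ->. Qed.

Lemma herm_inv n (A : 'M[C]_n) : herm A -> herm (invmx A).
Proof. by rewrite /herm ctr_inv => ->. Qed.

Lemma qf0 n (A : 'M[C]_n) : qf A 0 = 0.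
Proof. by rewrite /qf mulmx0 mxE. Qed.

Lemma qfD n (A B : 'M[C]_n) x : qf (A + B) x = qf A x + qf B x.
Proof. by rewrite /qf mulmxDr mulmxDl mxE. Qed.

Lemma qfB n (A B : 'M[C]_n) x : qf (A - B) x = qf A x - qf B x.
Proof. by rewrite /qf mulmxBr mulmxBl !mxE. Qed.

Lemma qfZ n (c : C) (A : 'M[C]_n) x : qf (c *: A) x = c * qf A x.
Proof. by rewrite /qf -scalemxAr -scalemxAl mxE. Qed.

Lemma qf1 n (x : 'cV[C]_n) : qf 1%:M x = \sum_j x j 0 * conjc (x j 0).
Proof. by rewrite /qf mulmx1 mxE; apply: eq_bigr => j _; rewrite !mxE mulrC. Qed.

Lemma qf1_gt0 n (x : 'cV[C]_n) : x != 0 -> 0 < qf 1%:M x.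
Proof.
move=> nz_x; have [j xj_nz] : exists j, x j 0 != 0.
  apply/existsP; apply: contraR nz_x; rewrite negb_exists => /forallP x0.
  by apply/eqP/matrixP => i k; rewrite (ord1 k) mxE; exact/eqP/negbNE/x0.
rewrite qf1 (bigD1 j) //= ltr_pwDl ?lt_def ?mulcJ_ge0 ?mulf_neq0 ?conjc_eq0 //.
by apply: sumr_ge0 => i _; exact: mulcJ_ge0.
Qed.

Lemma psd_pd n (A : 'M[C]_n) : pd A -> psd A.
Proof. by case=> hA pA; split=> // x; have [->|/pA/ltW//] := eqVneq x 0; rewrite qf0. Qed.

Lemma pd1 n : pd (1%:M : 'M[C]_n).
Proof. by split; [exact: herm1 | exact: qf1_gt0]. Qed.

Lemma psd1 n : psd (1%:M : 'M[C]_n).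
Proof. exact/psd_pd/pd1. Qed.

Lemma psd0 n : psd (0 : 'M[C]_n).
Proof.
split=> [|x]; first by apply/matrixP=> i j; rewrite ctrE !mxE conjc0.
by rewrite /qf mulmx0 mul0mx mxE.
Qed.

Lemma psdD n (A B : 'M[C]_n) : psd A -> psd B -> psd (A + B).
Proof. by case=> hA pA [hB pB]; split=> [|x]; [exact: hermD | rewrite qfD addr_ge0]. Qed.

Lemma psdZ n (c : C) (A : 'M[C]_n) : 0 <= c -> conjc c = c -> psd A -> psd (c *: A).
Proof. by move=> c0 cc [hA pA]; split=> [|x]; [exact: hermZ | rewrite qfZ mulr_ge0]. Qed.

Lemma pd_ge n (A B : 'M[C]_n) : pd B -> psd (A - B) -> pd A.
Proof.
case=> hB pB [hAB pAB]; split; first by rewrite -(subrK B A); exact: hermD.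
by move=> x /pB/lt_le_trans; apply; rewrite -subr_ge0 -qfB.
Qed.

Lemma pd_add_psd n (A B : 'M[C]_n) : pd A -> psd B -> pd (A + B).
Proof. by move=> pA pB; apply: (pd_ge pA); rewrite addrC addKr. Qed.

Definition pivot n (A : 'M[C]_(1 + n)) : C := ulsubmx A 0 0.
Definition cross n (A : 'M[C]_(1 + n)) (x : 'cV[C]_n) : C := (ursubmx A *m x) 0 0.
Definition schur n (A : 'M[C]_(1 + n)) : 'M[C]_n :=
  drsubmx A - (pivot A)^-1 *: (dlsubmx A *m ursubmx A).

Lemma herm_submx n (A : 'M[C]_(1 + n)) : herm A ->
  [/\ dlsubmx A = ctr (ursubmx A), herm (drsubmx A) & conjc (pivot A) = pivot A].
Proof.
rewrite /herm -{1 2}(submxK A) ctr_block => /eq_block_mx [hul _ hdl hdr].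
by split=> //; rewrite /pivot -ctrE hul.
Qed.

Lemma herm_blockE n (A : 'M[C]_(1 + n)) : herm A ->
  A = block_mx (ulsubmx A) (ursubmx A) (ctr (ursubmx A)) (drsubmx A).
Proof. by case/herm_submx => h1 _ _; rewrite -h1 submxK. Qed.

Lemma qf_block n (a : 'M[C]_1) (c : 'M[C]_(1, n)) (D : 'M[C]_n) (t : C) x :
  qf (block_mx a c (ctr c) D) (col_mx t%:M x) =
  conjc t * a 0 0 * t + conjc t * (c *m x) 0 0 + conjc ((c *m x) 0 0) * t + qf D x.
Proof.
rewrite /qf ctr_col ctr_scalar mul_row_block mul_row_col !mulmxDl.
rewrite !mul_scalar_mx mul_mx_scalar -!scalemxAl -ctrM.
rewrite [LHS]mxE [X in X + _ = _]mxE [X in _ + X = _]mxE mul_mx_scalar.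
by rewrite !mxE; ring.
Qed.

(* Completing the square. *)
Lemma qf_schur n (A : 'M[C]_(1 + n)) t x : herm A -> pivot A != 0 ->
  qf A (col_mx t%:M x) =
  pivot A * ((t + cross A x / pivot A) * conjc (t + cross A x / pivot A))
  + qf (schur A) x.
Proof.
move=> hA nz; have [h1 _ h3] := herm_submx hA.
rewrite {1}(herm_blockE hA) qf_block /schur qfB qfZ h1 {3}/qf.
have -> : (ctr x *m (ctr (ursubmx A) *m ursubmx A) *m x) 0 0
    = conjc (cross A x) * cross A x.
  by rewrite mulmxA -ctrM -mulmxA mxE big_ord1 ctrE.
rewrite rmorphD rmorphM /= conjc_inv h3 /cross.
by rewrite /pivot in nz h3 *; field.
Qed.

Lemma qf_pivot n (A : 'M[C]_(1 + n)) : herm A -> qf A (col_mx 1%:M 0) = pivot A.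
Proof.
move=> hA; have z : (0 : 'M[C]_1) 0 0 = 0 by rewrite mxE.
rewrite {1}(herm_blockE hA) qf_block mulmx0 qf0 z conjc1 conjc0.
by rewrite mulr0 mul0r !mul1r mulr1 !addr0.
Qed.

Lemma pd_pivot_gt0 n (A : 'M[C]_(1 + n)) : pd A -> 0 < pivot A.
Proof.
case=> hA pA; rewrite -qf_pivot //; apply: pA.
by rewrite col_mx_eq0 negb_and (matrix_nonzero1 C 0).
Qed.

Lemma pd_schur n (A : 'M[C]_(1 + n)) : pd A -> pd (schur A).
Proof.
move=> pA; have a_gt0 := pd_pivot_gt0 pA; case: pA => hA pA.
have [h1 h2 h3] := herm_submx hA.
split; first by rewrite /herm /schur ctrB ctrZ ctrM h1 ctrK conjc_inv h3 h2.
move=> x nz_x; have := pA (col_mx (- (cross A x / pivot A))%:M x).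
rewrite col_mx_eq0 negb_and nz_x orbT qf_schur ?lt0r_neq0 // => /(_ isT).
by rewrite addNr mul0r mulr0 add0r.
Qed.

Lemma schur_mono n (A B : 'M[C]_(1 + n)) : pd B -> psd (A - B) ->
  psd (schur A - schur B) /\ pivot B <= pivot A.
Proof.
move=> pB pAB; have pA := pd_ge pB pAB.
have aA := pd_pivot_gt0 pA; have aB := pd_pivot_gt0 pB.
have nA := lt0r_neq0 aA; have nB := lt0r_neq0 aB.
have [sA _] := pd_schur pA; have [sB _] := pd_schur pB.
case: pA => hA _; case: pB => hB _; case: pAB => _ pAB.
split; last by have := pAB (col_mx 1%:M 0); rewrite qfB !qf_pivot // subr_ge0.
split=> [|x]; first exact: hermB.
rewrite qfB subr_ge0.
(* Test [A - B] on the vector minimising the quadratic form of [A] in the first coordinate. *)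
have := pAB (col_mx (- (cross A x / pivot A))%:M x).
rewrite qfB subr_ge0 (qf_schur _ _ hA nA) (qf_schur _ _ hB nB).
rewrite addNr mul0r mulr0 add0r; apply: le_trans.
by rewrite lerDr mulr_ge0 ?mulcJ_ge0 ?(ltW aB).
Qed.

Lemma det_schur n (A : 'M[C]_(1 + n)) : pivot A != 0 ->
  \det A = pivot A * \det (schur A).
Proof.
move=> nz.
have E : A = block_mx 1%:M 0 ((pivot A)^-1 *: dlsubmx A) 1%:M
            *m block_mx (ulsubmx A) (ursubmx A) 0 (schur A).
  rewrite mulmx_block !mul1mx !mul0mx !addr0 -!scalemxAl.
  rewrite {2}(mx11_scalar (ulsubmx A)) mul_mx_scalar scalerA mulVf // scale1r.
  by rewrite /schur addrC subrK submxK.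
by rewrite {1}E det_mulmx det_lblock !det1 mul1r det_ublock det_mx11 mul1r.
Qed.

Lemma det_psd_mono n (A B : 'M[C]_n) : pd B -> psd (A - B) ->
  0 < \det B /\ \det B <= \det A.
Proof.
elim: n A B => [|n IH] A B pB pAB; first by rewrite !det_mx00 ltr01 lexx.
have pA := pd_ge pB pAB.
have [pS le_pivot] := schur_mono pB pAB.
have aA := pd_pivot_gt0 pA; have aB := pd_pivot_gt0 pB.
have [dB dle] := IH _ _ (pd_schur pB) pS.
rewrite (det_schur (lt0r_neq0 aA)) (det_schur (lt0r_neq0 aB)).
split; [exact: mulr_gt0 aB dB | exact: ler_pM (ltW aB) (ltW dB) le_pivot dle].
Qed.

Lemma pd_det_gt0 n (A : 'M[C]_n) : pd A -> 0 < \det A.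
Proof.
by move=> pA; have [] := det_psd_mono pA (_ : psd (A - A)) => //; rewrite subrr; exact: psd0.
Qed.

Lemma pd_unitmx n (A : 'M[C]_n) : pd A -> A \in unitmx.
Proof. by move=> pA; rewrite unitmxE unitfE lt0r_neq0 ?pd_det_gt0. Qed.

Lemma pd_inv n (A : 'M[C]_n) : pd A -> pd (invmx A).
Proof.
move=> pA; have uA := pd_unitmx pA; case: pA => hA pA.
split=> [|x nz_x]; first exact: herm_inv.
have ex : x = A *m (invmx A *m x) by rewrite mulKVmx.
have nz_y : invmx A *m x != 0 by apply: contraNneq nz_x => e; rewrite ex e mulmx0.
have := pA _ nz_y; congr (0 < _).
by rewrite /qf {3 4}ex ctrM (hA : ctr A = A) (mulmxK uA) !mulmxA.
Qed.
End HermitianMatrices.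

Arguments pd1 {R n}.
Arguments psd1 {R n}.
Arguments psd0 {R n}.

Section Log2.
Variable R : realType.

Lemma ln2_gt0 : 0 < ln (2 : R).
Proof. by rewrite ln_gt0 // ltr1n. Qed.

Lemma ler_log2 (x y : R) : 0 < x -> 0 < y -> (log2 x <= log2 y) = (x <= y).
Proof. by move=> x0 y0; rewrite /log2 ler_pM2r ?invr_gt0 ?ln2_gt0 // ler_ln ?posrE. Qed.

Lemma log2_exp2M n (x : R) : 0 < x -> log2 (2 ^+ n * x) = n%:R + log2 x.
Proof.
move=> x0; rewrite /log2 lnM ?posrE ?exprn_gt0 // lnXn // mulrDl.
by rewrite -[ln 2 *+ n]mulr_natl mulfK // gt_eqF ?ln2_gt0.
Qed.

Lemma log2_gap n (x y z : R) : 0 < x -> 0 < y -> 0 < z ->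
  z <= 2 ^+ n * x -> y <= 2 ^+ n -> log2 z - n%:R *+ 2 <= log2 x - log2 y.
Proof.
move=> x0 y0 z0 zx y2.
have hz : log2 z <= n%:R + log2 x by rewrite -log2_exp2M // ler_log2 // mulr_gt0 ?exprn_gt0.
have hy : log2 y <= n%:R.
  have := log2_exp2M n (@ltr01 R); rewrite mulr1 {2}/log2 ln1 mul0r addr0 => <-.
  by rewrite ler_log2 ?exprn_gt0.
by rewrite mulr2n; lra.
Qed.
End Log2.

(* Stated over plain variables so that they apply to [logdet] terms by syntactic
   matching: [lra] on the original goals spends minutes in conversion checks
   between the large [logdet] atoms. *)
Section RateArithmetic.
Variable R : realFieldType.
Implicit Types q t y s : R.

Lemma ler_shift q t y s : q <= t -> t - y <= s -> q - y <= s.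
Proof. by move=> *; lra. Qed.

Lemma ler_shift2 q1 q2 t1 t2 y1 y2 s1 s2 :
  q1 + q2 <= t1 + t2 -> t1 - y1 <= s1 -> t2 - y2 <= s2 -> q1 - y1 + (q2 - y2) <= s1 + s2.
Proof. by move=> *; lra. Qed.

Lemma ler_shift2_swap q1 q2 t1 t2 y1 y2 s1 s2 :
  q1 + q2 <= t1 + t2 -> t1 - y2 <= s1 -> t2 - y1 <= s2 -> q1 - y1 + (q2 - y2) <= s1 + s2.
Proof. by move=> *; lra. Qed.

Lemma ler_shift3l q1 q2 t1 t2 t3 y1 y2 s1 s2 s3 : q1 *+ 2 + q2 <= t1 + t2 + t3 ->
  t1 - y1 <= s1 -> t2 - y2 <= s3 -> t3 - y1 <= s2 -> (q1 - y1) *+ 2 + (q2 - y2) <= s1 + s2 + s3.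
Proof. by move=> *; lra. Qed.

Lemma ler_shift3r q1 q2 t1 t2 t3 y1 y2 s1 s2 s3 : q1 + q2 *+ 2 <= t1 + t2 + t3 ->
  t1 - y2 <= s1 -> t2 - y1 <= s3 -> t3 - y2 <= s2 -> q1 - y1 + (q2 - y2) *+ 2 <= s1 + s2 + s3.
Proof. by move=> *; lra. Qed.
End RateArithmetic.

Section GaussianRates.
Variable R : realType.
Local Notation C := (R[i]).
Local Notation half := ((1 / 2 : R)%:C)%C.

Lemma halfE : half = 2^-1 :> C.
Proof. by rewrite mul1r fmorphV /= rmorph_nat. Qed.

Lemma realC_ge0 (r : R) : 0 <= r -> 0 <= (r%:C)%C.
Proof. by rewrite lecR. Qed.

Lemma psd_half n (A : 'M[C]_n) : psd A -> psd (half *: A).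
Proof. by apply: psdZ; rewrite ?conjc_real // realC_ge0 // divr_ge0 ?ler0n. Qed.

Lemma gramD m n (r : R) (H : 'M[C]_(n, m)) K K' :
  gram r H (K + K') = gram r H K + gram r H K'.
Proof. by rewrite /gram mulmxDr mulmxDl scalerDr. Qed.

Lemma gramZ m n (r : R) (H : 'M[C]_(n, m)) (c : C) K :
  gram r H (c *: K) = c *: gram r H K.
Proof. by rewrite /gram -scalemxAr -scalemxAl !scalerA mulrC. Qed.

Lemma psd_gram m n (r : R) (H : 'M[C]_(n, m)) K : 0 <= r -> psd K -> psd (gram r H K).
Proof.
move=> r0 [hK pK]; split=> [|x]; rewrite /gram; last rewrite qfZ mulr_ge0 ?realC_ge0 //.
  by apply: hermZ; rewrite ?conjc_real // /herm !ctrM ctrK hK mulmxA.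
by have := pK (ctr H *m x); rewrite /qf ctrM ctrK !mulmxA.
Qed.

Lemma pd_1_gram m n (r : R) (H : 'M[C]_(n, m)) : 0 <= r -> pd (1%:M + gram r H 1%:M).
Proof. by move=> r0; apply: pd_add_psd pd1 (psd_gram H r0 psd1). Qed.

Lemma pd_Pmx m n (r : R) (H : 'M[C]_(n, m)) : 0 <= r -> pd (Pmx r H).
Proof.
have -> : Pmx r H = 1%:M + gram r (ctr H) 1%:M by rewrite /gram mulmx1 ctrK.
exact: pd_1_gram.
Qed.

Lemma psd_invPmx m n (r : R) (H : 'M[C]_(n, m)) : 0 <= r -> psd (invmx (Pmx r H)).
Proof. by move=> r0; apply/psd_pd/pd_inv/pd_Pmx. Qed.

(* Push-through identity: from [(I + r H H^+) H = H (I + r H^+ H)]. *)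
Lemma subr_gram_invPmx m n (r : R) (H : 'M[C]_(n, m)) : 0 <= r ->
  1%:M - gram r H (invmx (Pmx r H)) = invmx (1%:M + gram r H 1%:M).
Proof.
move=> r0; set P := Pmx r H; set Q := 1%:M + gram r H 1%:M.
have uP : P \in unitmx by apply/pd_unitmx/pd_Pmx.
have uQ : Q \in unitmx by apply/pd_unitmx/pd_1_gram.
have QH : Q *m H = H *m P.
  rewrite /Q /P /Pmx /gram mulmx1 mulmxDl mulmxDr mul1mx mulmx1.
  by rewrite -!scalemxAl -!scalemxAr !mulmxA.
have HP : H *m invmx P = invmx Q *m H.
  by rewrite -[H *m invmx P](mulKmx uQ) (mulmxA Q) QH (mulmxK uP).
have -> : gram r H (invmx P) = invmx Q *m (Q - 1%:M).
  by rewrite /gram HP -mulmxA scalemxAr /Q addrC addrK /gram mulmx1.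
by rewrite mulmxBr (mulVmx uQ) mulmx1 opprB addrC subrK.
Qed.

Definition noise_cov n (S : 'M[C]_n) := psd (S - 1%:M) /\ \det S <= 2 ^+ n.

Lemma pd_noise_cov n (S : 'M[C]_n) : noise_cov S -> pd S.
Proof. by case=> pS _; apply: pd_ge pd1 pS. Qed.

Lemma noise_cov_private m n (r : R) (H : 'M[C]_(n, m)) : 0 <= r ->
  noise_cov (1%:M + gram r H (half *: invmx (Pmx r H))).
Proof.
move=> r0; set G := gram r H (invmx (Pmx r H)).
have pG : psd G by apply/psd_gram/psd_invPmx.
have p1G : psd (1%:M - G) by rewrite subr_gram_invPmx //; apply/psd_pd/pd_inv/pd_1_gram.
have phG := psd_half pG.
rewrite gramZ -/G; split; first by rewrite addrC addKr.
suff pU : psd (2%:M - (1%:M + half *: G)).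
  by have [_] := det_psd_mono (pd_add_psd pd1 phG) pU; rewrite det_scalar.
have -> : 2%:M - (1%:M + half *: G) = 1%:M - G + half *: G.
  by apply/matrixP=> i j; rewrite !mxE halfE; field.
exact: psdD.
Qed.

Lemma psd_two n (A : 'M[C]_n) : psd A -> psd (2 *: A).
Proof. by apply: psdZ; rewrite ?ler0n // rmorph_nat. Qed.

(* [2 (S + A) - (I + B) = 2 (S - I) + 2 (A - B / 2) + I] dominates zero. *)
Lemma det_add_half_le n (S A B : 'M[C]_n) :
  psd (S - 1%:M) -> psd B -> psd (A - half *: B) ->
  \det (1%:M + B) <= 2 ^+ n * \det (S + A).
Proof.
move=> pS pB pAB; rewrite -detZ.
suff pU : psd (2 *: (S + A) - (1%:M + B)) by have [] := det_psd_mono (pd_add_psd pd1 pB) pU.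
have -> : 2 *: (S + A) - (1%:M + B) = 2 *: (S - 1%:M) + 2 *: (A - half *: B) + 1%:M.
  by apply/matrixP=> i j; rewrite !mxE halfE; field.
by apply: psdD psd1; apply: psdD; exact: psd_two.
Qed.

Lemma gt0_realC (z : C) : 0 < z -> z = ((complex.Re z)%:C)%C /\ 0 < complex.Re z.
Proof. by case: z => a b; rewrite ltcE /= => /andP [/eqP -> h]. Qed.

Lemma logdet_gap n (S A B : 'M[C]_n) : noise_cov S -> psd B -> psd (A - half *: B) ->
  logdet (1%:M + B) - n%:R *+ 2 <= logdet (S + A) - logdet S.
Proof.
move=> [pS1 dS] pB pAB; have pS := pd_noise_cov (conj pS1 dS).
have pA : psd A by rewrite -(subrK (half *: B) A); apply: psdD pAB (psd_half pB).
have [e1 g1] := gt0_realC (pd_det_gt0 (pd_add_psd pS pA)).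
have [e2 g2] := gt0_realC (pd_det_gt0 pS).
have [e3 g3] := gt0_realC (pd_det_gt0 (pd_add_psd pd1 pB)).
have le := det_add_half_le pS1 pB pAB.
rewrite /logdet; apply: log2_gap => //.
  by move: le; rewrite e1 e3 -(rmorph_nat (@real_complex R)) -rmorphXn -rmorphM lecR.
by move: dS; rewrite e2 -(rmorph_nat (@real_complex R)) -rmorphXn lecR.
Qed.

Lemma logdet_gap_half n (S B E : 'M[C]_n) : noise_cov S -> psd B -> psd E ->
  logdet (1%:M + B) - n%:R *+ 2 <= logdet (S + (half *: B + E)) - logdet S.
Proof. by move=> hS pB pE; apply: logdet_gap => //; rewrite addrC addKr. Qed.

(* At the receiver with direct channel [Hd] and cross channel [Hc], each
   Han-Kobayashi mutual information is within [2 n] bits of its term in [Rc]. *)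
Lemma receiver_gaps m m' n (rd rc : R) (Hd : 'M[C]_(n, m)) (Hc : 'M[C]_(n, m')) Q :
  0 <= rd -> 0 <= rc -> psd Q ->
  let S := 1%:M + gram rc Hc (half *: invmx (Pmx rc Hc)) in
  [/\ logdet (1%:M + gram rd Hd 1%:M) - n%:R *+ 2
        <= logdet (S + gram rd Hd (half *: 1%:M + half *: Q)) - logdet S,
      logdet (1%:M + gram rc Hc 1%:M + gram rd Hd 1%:M) - n%:R *+ 2
        <= logdet (S + gram rd Hd (half *: 1%:M + half *: Q) + gram rc Hc (half *: 1%:M))
           - logdet S,
      logdet (1%:M + gram rd Hd Q) - n%:R *+ 2
        <= logdet (S + gram rd Hd (half *: Q)) - logdet S,
      logdet (1%:M + gram rd Hd Q + gram rc Hc 1%:M) - n%:R *+ 2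
        <= logdet (S + gram rd Hd (half *: Q) + gram rc Hc (half *: 1%:M)) - logdet S
    & logdet (1%:M + gram rc Hc 1%:M + gram rd Hd Q) - n%:R *+ 2
        <= logdet (S + gram rd Hd (half *: Q) + gram rc Hc (half *: 1%:M)) - logdet S].
Proof.
move=> rd0 rc0 pQ S; have hS : noise_cov S := noise_cov_private Hc rc0.
have := psd_gram Hd rd0 psd1; have := psd_gram Hd rd0 pQ; have := psd_gram Hc rc0 psd1.
rewrite !gramD !gramZ; clearbody S.
move: (gram rd Hd 1%:M) (gram rd Hd Q) (gram rc Hc 1%:M) => G1 GQ GC pGC pGQ pG1.
have gap0 B : psd B -> logdet (1%:M + B) - n%:R *+ 2 <= logdet (S + half *: B) - logdet S.
  by move=> pB; have := logdet_gap_half hS pB psd0; rewrite addr0.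
split.
- exact: logdet_gap_half hS pG1 (psd_half pGQ).
- rewrite -!addrA [GC + G1]addrC [_ *: GQ + _]addrC [_ *: G1 + _]addrA -scalerDr.
  exact: logdet_gap_half hS (psdD pG1 pGC) (psd_half pGQ).
- exact: gap0.
- by rewrite -!addrA -scalerDr; apply/gap0/psdD.
- by rewrite -!addrA -scalerDr [GC + GQ]addrC; apply/gap0/psdD.
Qed.
End GaussianRates.

Unset Implicit Arguments.

Theorem lemma2 (R : realType) (M1 M2 N1 N2 : nat)
  (H11 : 'M[R[i]]_(N1, M1)) (H12 : 'M[R[i]]_(N2, M1))
  (H21 : 'M[R[i]]_(N1, M2)) (H22 : 'M[R[i]]_(N2, M2))
  (r11 r12 r21 r22 : R) :
  0 <= r11 -> 0 <= r12 -> 0 <= r21 -> 0 <= r22 ->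
  let K11 : 'M[R[i]]_M1 := ((1/2 : R)%:C)%C *: 1%:M in
  let K21 : 'M[R[i]]_M2 := ((1/2 : R)%:C)%C *: 1%:M in
  let K12 : 'M[R[i]]_M1 := ((1/2 : R)%:C)%C *: invmx (Pmx r12 H12) in
  let K22 : 'M[R[i]]_M2 := ((1/2 : R)%:C)%C *: invmx (Pmx r21 H21) in
  forall R1 R2 : R, 0 <= R1 -> 0 <= R2 ->
  shift_region (Rc H11 H12 H21 H22 r11 r12 r21 r22) (N1%:R *+ 2) (N2%:R *+ 2) (R1, R2) ->
  HK_region H11 H12 H21 H22 r11 r12 r21 r22 K11 K12 K21 K22 (R1, R2).
Proof.
move=> p11 p12 p21 p22 K11 K21 K12 K22 R1 R2 R1_ge0 R2_ge0 [[Q1 Q2] [inRc [eR1 eR2]]].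
subst R1 R2.
case: inRc => /= _ [_ [c1 [c2 [c3 [c4 [c5 [c6 c7]]]]]]].
have [a1 b1 cc1 d1 d1'] := receiver_gaps H11 H21 p11 p21 (psd_invPmx H12 p12).
have [a2 b2 cc2 _ d2'] := receiver_gaps H22 H12 p22 p12 (psd_invPmx H21 p21).
rewrite /HK_region /= /K11 /K12 /K21 /K22.
split; first exact: R1_ge0.
split; first exact: R2_ge0.
split; first exact: ler_shift c1 a1.
split; first exact: ler_shift c2 a2.
split; first exact: ler_shift2 c4 b1 cc2.
split; first exact: ler_shift2_swap c3 b2 cc1.
split; first exact: ler_shift2 c5 d1 d2'.
split; first exact: ler_shift3l c6 b1 d2' cc1.
exact: ler_shift3r c7 b2 d1' cc2.
Qed.
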